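(* Let $n\ge2$, $\rho^*\ge0$, $k_\rho,k_z,k_\phi,k_\omega>0$, and nonnegative constants $\xi_1,\dots,\xi_n$ with average $\bar\xi=\frac1n\sum_{i=1}^n\xi_i$. Consider the closed-loop system, for $i=1,\dots,n$, $$\dot\rho_i=k_\rho(\rho^*-\rho_i),\quad \dot\omega_i=k_\omega(\bar\phi_i-\phi_i),\ \omega_i(t_0)=0,\quad \dot\phi_i=\omega_i+k_\phi(\bar\phi_i-\phi_i)+\xi_i,\quad \dot z_i=-k_zz_i,$$ with $\bar\phi_i$ as defined in the context. Then for every initial condition of $(\rho_i,\phi_i,z_i)$ (and $\omega_i(t_0)=0$), as $t\to\infty$, exponentially: $\rho_i\to\rho^*$, $\phi_i-\bar\phi_i\to0$, $\dot\phi_i\to\bar\xi$, and $z_i\to0$, for all $i$.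
   Context: There are $n$ robots with cylindrical coordinates $(\rho_i,\phi_i,z_i)$ relative to a target frame (radius, phase, height), whose dynamics after a feedback transformation are $\dot\rho_i,\dot\phi_i,\dot z_i$ equal to free inputs; $\omega_i$ is an internal controller state. The phases $\phi_i(t)$ are real-valued (not reduced modulo $2\pi$), robots indexed in counterclockwise phase order at the initial time. Phase averages: $\bar\phi_1=\frac{\phi_2+\phi_n-2\pi}{2}$, $\bar\phi_i=\frac{\phi_{i+1}+\phi_{i-1}}{2}$ for $2\le i\le n-1$, $\bar\phi_n=\frac{\phi_1+2\pi+\phi_{n-1}}{2}$. *)

From Stdlib Require Import Reals Lra Lia.
Open Scope R_scope.

(* Robots are indexed 1..n (as in the paper). [phi i t] is the real-valued
   (unwrapped) phase of robot i at time t. *)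
Definition phibar (n : nat) (phi : nat -> R -> R) (i : nat) (t : R) : R :=
  if Nat.eqb i 1 then (phi 2%nat t + phi n t - 2 * PI) / 2
  else if Nat.eqb i n then (phi 1%nat t + 2 * PI + phi (n - 1)%nat t) / 2
  else (phi (i + 1)%nat t + phi (i - 1)%nat t) / 2.

Definition exp_conv (t0 : R) (f : R -> R) (l : R) : Prop :=
  exists c lam : R, 0 < lam /\ forall t, t0 <= t -> Rabs (f t - l) <= c * exp (- lam * (t - t0)).

From Stdlib Require Import Reals Lra Lia Psatz.
Open Scope R_scope.

(* The radial and vertical equations are scalar linear ODEs rho' = k (rho* - rho) and
   z' = - k z, whose solutions converge exponentially (integrating factor).  Subtracting the uniform spacing 2 pi j / n from the phases
   turns the phase errors e_j = phibar_j - phi_j into the ring Laplacian of the unwrapped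
   phases; with w_j = omega_j + xi_j - mean(xi) the closed loop becomes the linear
   PI-consensus system  e' = lap (w + k_phi e),  w' = k_omega e  on zero-sum vectors
   (sum e = 0 because the Laplacian has zero mass, sum w = 0 because sum omega is
   conserved and starts at 0).  A quadratic Lyapunov function
     V = k_omega |e|^2 + 1/2 |grad w|^2 + eps <e, w>
   satisfies V' <= - mu V and V >= c (|e|^2 + |w|^2), by summation by parts on the ring and
   the discrete Poincare inequality |x|^2 <= n^2 |grad x|^2 for zero-sum x. *)

(* [sum_to m f] is f 1 + ... + f m: robots are indexed from 1. *)
Fixpoint sum_to (m : nat) (f : nat -> R) : R :=
  match m with O => 0 | S p => sum_to p f + f (S p) end.

Lemma sum_to_ext m f g :
  (forall i, (1 <= i <= m)%nat -> f i = g i) -> sum_to m f = sum_to m g.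
Proof.
  induction m as [|m IH]; intros Hfg; simpl; [reflexivity|].
  rewrite IH by (intros; apply Hfg; lia). rewrite Hfg by lia. reflexivity.
Qed.

Lemma sum_to_add m f g : sum_to m (fun i => f i + g i) = sum_to m f + sum_to m g.
Proof. induction m as [|m IH]; simpl; [ring|]. rewrite IH; ring. Qed.

Lemma sum_to_scal m a f : sum_to m (fun i => a * f i) = a * sum_to m f.
Proof. induction m as [|m IH]; simpl; [ring|]. rewrite IH; ring. Qed.

Lemma sum_to_const m c : sum_to m (fun _ => c) = INR m * c.
Proof. induction m as [|m IH]; simpl sum_to; [simpl; ring|]. rewrite IH, S_INR; ring. Qed.

Lemma sum_to_le m f g :
  (forall i, (1 <= i <= m)%nat -> f i <= g i) -> sum_to m f <= sum_to m g.
Proof.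
  induction m as [|m IH]; intros Hfg; simpl; [lra|].
  apply Rplus_le_compat; [apply IH; intros; apply Hfg|apply Hfg]; lia.
Qed.

Lemma sum_to_nonneg m f : (forall i, (1 <= i <= m)%nat -> 0 <= f i) -> 0 <= sum_to m f.
Proof. intros Hf. rewrite <- (Rmult_0_r (INR m)), <- sum_to_const. apply sum_to_le; auto. Qed.

Lemma sum_to_mono m p f :
  (m <= p)%nat -> (forall i, (1 <= i <= p)%nat -> 0 <= f i) -> sum_to m f <= sum_to p f.
Proof.
  induction p as [|p IH]; intros Hmp Hf.
  - replace m with 0%nat by lia. lra.
  - destruct (Nat.eq_dec m (S p)) as [->|Hne]; [lra|]. simpl.
    assert (sum_to m f <= sum_to p f) by (apply IH; [lia|intros; apply Hf; lia]).
    assert (0 <= f (S p)) by (apply Hf; lia). lra.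
Qed.

Lemma sum_to_term_le m f i :
  (forall j, (1 <= j <= m)%nat -> 0 <= f j) -> (1 <= i <= m)%nat -> f i <= sum_to m f.
Proof.
  intros Hf Hi. apply Rle_trans with (sum_to i f).
  - destruct i as [|i]; [lia|]. simpl.
    assert (0 <= sum_to i f) by (apply sum_to_nonneg; intros; apply Hf; lia). lra.
  - apply sum_to_mono; [lia|auto].
Qed.

Lemma sum_to_first m f : sum_to (S m) f = f 1%nat + sum_to m (fun i => f (S i)).
Proof.
  induction m as [|m IH]; [simpl; ring|].
  change (sum_to (S (S m)) f) with (sum_to (S m) f + f (S (S m))). rewrite IH. simpl. ring.
Qed.

Lemma sum_to_telescope m x : sum_to m (fun j => x (S j) - x j) = x (S m) - x 1%nat.
Proof. induction m as [|m IH]; simpl; [ring|]. rewrite IH. ring. Qed.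

(* Cauchy-Schwarz against the constant vector: the sum of squared deviations
   of [N * f i] from the total [s] equals [N * (N * sum f^2 - s^2)] and is nonnegative. *)
Lemma sum_to_sq_le m f : (sum_to m f) ^ 2 <= INR m * sum_to m (fun i => f i ^ 2).
Proof.
  destruct m as [|m]; [simpl; lra|].
  set (s := sum_to (S m) f). set (N := INR (S m)). set (Q := sum_to (S m) (fun i => f i ^ 2)).
  assert (HN : 0 < N) by (apply lt_0_INR; lia).
  assert (Hdev : 0 <= sum_to (S m) (fun i => (N * f i - s) ^ 2))
    by (apply sum_to_nonneg; intros; apply pow2_ge_0).
  rewrite (sum_to_ext _ _ (fun i => (N ^ 2 * f i ^ 2 + (-2 * N * s) * f i) + s ^ 2)) in Hdev
    by (intros; ring).
  rewrite !sum_to_add, !sum_to_scal, sum_to_const in Hdev. fold s N Q in Hdev.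
  assert (0 <= N * (N * Q - s ^ 2)) by nra. nra.
Qed.

Definition nxt (n i : nat) : nat := if Nat.eqb i n then 1%nat else S i.
Definition prv (n i : nat) : nat := if Nat.eqb i 1 then n else (i - 1)%nat.

Lemma nxt_range n i : (1 <= i <= n)%nat -> (1 <= nxt n i <= n)%nat.
Proof. intros Hi. unfold nxt. destruct (Nat.eqb_spec i n); lia. Qed.

Lemma prv_range n i : (1 <= i <= n)%nat -> (1 <= prv n i <= n)%nat.
Proof. intros Hi. unfold prv. destruct (Nat.eqb_spec i 1); lia. Qed.

Lemma prv_nxt n i : (1 <= i <= n)%nat -> prv n (nxt n i) = i.
Proof.
  intros Hi. unfold nxt, prv. destruct (Nat.eqb_spec i n).
  - simpl. lia.
  - destruct (Nat.eqb_spec (S i) 1); lia.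
Qed.

Lemma sum_to_nxt n f : (1 <= n)%nat -> sum_to n (fun i => f (nxt n i)) = sum_to n f.
Proof.
  intros Hn. destruct n as [|m]; [lia|].
  rewrite (sum_to_first m f).
  change (sum_to m (fun i => f (nxt (S m) i)) + f (nxt (S m) (S m))
          = f 1%nat + sum_to m (fun i => f (S i))).
  unfold nxt at 2. rewrite Nat.eqb_refl.
  rewrite (sum_to_ext m _ (fun i => f (S i))); [ring|].
  intros i Hi. unfold nxt. destruct (Nat.eqb_spec i (S m)); [lia|reflexivity].
Qed.

Lemma sum_to_prv n f : (1 <= n)%nat -> sum_to n (fun i => f (prv n i)) = sum_to n f.
Proof.
  intros Hn. rewrite <- (sum_to_nxt n (fun i => f (prv n i))) by exact Hn.
  apply sum_to_ext. intros i Hi. rewrite prv_nxt; auto.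
Qed.

Definition dot (n : nat) (x y : nat -> R) : R := sum_to n (fun i => x i * y i).
Definition grad (n : nat) (x : nat -> R) (i : nat) : R := x (nxt n i) - x i.
Definition lap (n : nat) (x : nat -> R) (i : nat) : R := (x (nxt n i) + x (prv n i)) / 2 - x i.

Lemma dot_ext n x x' y y' :
  (forall i, (1 <= i <= n)%nat -> x i * y i = x' i * y' i) -> dot n x y = dot n x' y'.
Proof. apply sum_to_ext. Qed.

Lemma dot_comm n x y : dot n x y = dot n y x.
Proof. apply dot_ext. intros; ring. Qed.

Lemma dot_addr n x y z : dot n x (fun i => y i + z i) = dot n x y + dot n x z.
Proof. unfold dot. rewrite <- sum_to_add. apply sum_to_ext. intros; ring. Qed.

Lemma dot_scalr n x y c : dot n x (fun i => c * y i) = c * dot n x y.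
Proof. unfold dot. rewrite <- sum_to_scal. apply sum_to_ext. intros; ring. Qed.

Lemma dot_grad_scal n z x c : dot n z (grad n (fun l => c * x l)) = c * dot n z (grad n x).
Proof.
  rewrite <- dot_scalr. apply dot_ext. intros. unfold grad. ring.
Qed.

Lemma dot_grad_add n z x y :
  dot n z (grad n (fun l => x l + y l)) = dot n z (grad n x) + dot n z (grad n y).
Proof.
  rewrite <- dot_addr. apply dot_ext. intros. unfold grad. ring.
Qed.

Lemma dot_self_nonneg n x : 0 <= dot n x x.
Proof. apply sum_to_nonneg. intros. apply Rle_0_sqr. Qed.

Lemma dot_self_term_le n x i : (1 <= i <= n)%nat -> x i ^ 2 <= dot n x x.
Proof.
  intros Hi. unfold dot. rewrite <- Rsqr_pow2.
  apply (sum_to_term_le n (fun j => x j * x j)); auto. intros. apply Rle_0_sqr.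
Qed.

Lemma dot_young n x y a : 2 * a * dot n x y <= a ^ 2 * dot n x x + dot n y y.
Proof.
  unfold dot. rewrite <- !sum_to_scal, <- sum_to_add. apply sum_to_le.
  intros i _. pose proof (pow2_ge_0 (a * x i - y i)). nra.
Qed.

Lemma dot_lap n a b : (1 <= n)%nat -> dot n a (lap n b) = - (1/2) * dot n (grad n a) (grad n b).
Proof.
  intros Hn. unfold dot, lap, grad.
  (* Split the Laplacian into a forward and a backward difference, then rotate the
     backward sum by one step so that it becomes a forward one. *)
  rewrite (sum_to_ext n _ (fun i => (1/2) * (a i * (b (nxt n i) - b i))
                                     + (1/2) * (a i * (b (prv n i) - b i)))) by (intros; field).
  rewrite sum_to_add, !sum_to_scal.
  rewrite <- (sum_to_nxt n (fun i => a i * (b (prv n i) - b i))) by exact Hn.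
  rewrite (sum_to_ext n (fun i => a (nxt n i) * (b (prv n (nxt n i)) - b (nxt n i)))
             (fun i => a (nxt n i) * (b i - b (nxt n i)))) by (intros; rewrite prv_nxt; auto).
  rewrite (sum_to_ext n (fun i => (a (nxt n i) - a i) * (b (nxt n i) - b i))
     (fun i => (-1) * (a i * (b (nxt n i) - b i)) + (-1) * (a (nxt n i) * (b i - b (nxt n i)))))
    by (intros; ring).
  rewrite sum_to_add, !sum_to_scal. ring.
Qed.

Lemma sum_to_lap n x : (1 <= n)%nat -> sum_to n (lap n x) = 0.
Proof.
  intros Hn. unfold lap.
  rewrite (sum_to_ext n _ (fun i => (/2) * x (nxt n i) + ((/2) * x (prv n i) + (-1) * x i)))
    by (intros; field).
  rewrite !sum_to_add, !sum_to_scal, sum_to_nxt, sum_to_prv by exact Hn. field.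
Qed.

(* Discrete Poincare inequality on the ring: a zero-mean vector is controlled by its
   gradient, |x|^2 <= n^2 |grad x|^2.  Write |x|^2 = sum x_i (x_i - x_1), bound it by
   sum (x_i - x_1)^2, and telescope each x_i - x_1 along the ring. *)
Lemma poincare n x : (1 <= n)%nat -> sum_to n x = 0 ->
  dot n x x <= INR n * INR n * dot n (grad n x) (grad n x).
Proof.
  intros Hn Hsum. set (G := dot n (grad n x) (grad n x)).
  assert (Hcentre : dot n x x = sum_to n (fun i => x i * (x i - x 1%nat))).
  { unfold dot.
    rewrite (sum_to_ext n (fun i => x i * (x i - x 1%nat)) (fun i => x i * x i + (- x 1%nat) * x i))
      by (intros; ring).
    rewrite sum_to_add, sum_to_scal, Hsum. ring. }
  assert (Hgap : forall i, (1 <= i <= n)%nat -> (x i - x 1%nat) ^ 2 <= INR n * G).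
  { intros i Hi.
    assert (Htel : x i - x 1%nat = sum_to (i - 1) (grad n x)).
    { rewrite (sum_to_ext (i - 1) _ (fun j => x (S j) - x j)).
      - rewrite sum_to_telescope. replace (S (i - 1)) with i by lia. reflexivity.
      - intros j Hj. unfold grad, nxt. destruct (Nat.eqb_spec j n); [lia|reflexivity]. }
    rewrite Htel. eapply Rle_trans; [apply sum_to_sq_le|].
    apply Rmult_le_compat.
    - apply pos_INR.
    - apply sum_to_nonneg. intros. apply pow2_ge_0.
    - apply le_INR. lia.
    - unfold G, dot. rewrite (sum_to_ext n _ (fun j => grad n x j ^ 2)) by (intros; ring).
      apply sum_to_mono; [lia|]. intros. apply pow2_ge_0. }
  assert (Hyoung : sum_to n (fun i => x i * (x i - x 1%nat))
                   <= (1/2) * dot n x x + (1/2) * sum_to n (fun i => (x i - x 1%nat) ^ 2)).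
  { unfold dot. rewrite <- !sum_to_scal, <- sum_to_add. apply sum_to_le. intros i _.
    pose proof (pow2_ge_0 (x i - (x i - x 1%nat))). nra. }
  assert (Hgaps : sum_to n (fun i => (x i - x 1%nat) ^ 2) <= INR n * (INR n * G)).
  { rewrite <- sum_to_const. apply sum_to_le. exact Hgap. }
  lra.
Qed.

Lemma deriv_sum_to m (F : nat -> R -> R) (F' : nat -> R) t :
  (forall j, (1 <= j <= m)%nat -> derivable_pt_lim (F j) t (F' j)) ->
  derivable_pt_lim (fun s => sum_to m (fun j => F j s)) t (sum_to m F').
Proof.
  induction m as [|m IH]; intros HF; simpl.
  - apply derivable_pt_lim_const.
  - apply (derivable_pt_lim_plus (fun s => sum_to m (fun j => F j s)) (F (S m))).
    + apply IH. intros; apply HF; lia.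
    + apply HF; lia.
Qed.

Lemma deriv_dot n (x y : nat -> R -> R) (dx dy : nat -> R) t :
  (forall j, (1 <= j <= n)%nat -> derivable_pt_lim (x j) t (dx j)) ->
  (forall j, (1 <= j <= n)%nat -> derivable_pt_lim (y j) t (dy j)) ->
  derivable_pt_lim (fun s => dot n (fun j => x j s) (fun j => y j s)) t
    (dot n dx (fun j => y j t) + dot n (fun j => x j t) dy).
Proof.
  intros Hx Hy. unfold dot. rewrite <- sum_to_add.
  apply (deriv_sum_to n (fun j s => x j s * y j s)). intros j Hj.
  apply derivable_pt_lim_mult; auto.
Qed.

Lemma deriv_nonpos_le (g g' : R -> R) t0 :
  (forall t, t0 <= t -> derivable_pt_lim g t (g' t)) ->
  (forall t, t0 <= t -> g' t <= 0) ->
  forall t, t0 <= t -> g t <= g t0.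
Proof.
  intros Hd Hneg t Ht. destruct (Req_dec t t0) as [->|Hne]; [lra|].
  destruct (MVT_cor2 g g' t0 t) as [c [Hc Hct]]; [lra|intros; apply Hd; lra|].
  assert (g' c <= 0) by (apply Hneg; lra). nra.
Qed.

Lemma deriv_zero_const (g : R -> R) t0 :
  (forall t, t0 <= t -> derivable_pt_lim g t 0) -> forall t, t0 <= t -> g t = g t0.
Proof.
  intros Hd t Ht. apply Rle_antisym.
  - apply (deriv_nonpos_le g (fun _ => 0) t0); auto; intros; lra.
  - assert (- g t <= - g t0); [|lra].
    apply (deriv_nonpos_le (fun s => - g s) (fun _ => - 0) t0); auto; [|intros; lra].
    intros s Hs. apply derivable_pt_lim_opp. auto.
Qed.

Lemma deriv_exp_weight (f : R -> R) t0 mu s a :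
  derivable_pt_lim f s a ->
  derivable_pt_lim (fun r => f r * exp (mu * (r - t0))) s ((a + mu * f s) * exp (mu * (s - t0))).
Proof.
  intros Hf.
  assert (Hlin : derivable_pt_lim (fun r => mu * (r - t0)) s (mu * (1 - 0))).
  { apply derivable_pt_lim_scal, derivable_pt_lim_minus;
      [apply derivable_pt_lim_id|apply derivable_pt_lim_const]. }
  assert (Hexp := derivable_pt_lim_comp _ exp s _ _ Hlin (derivable_pt_lim_exp (mu * (s - t0)))).
  replace ((a + mu * f s) * exp (mu * (s - t0)))
    with (a * exp (mu * (s - t0)) + f s * (exp (mu * (s - t0)) * (mu * (1 - 0)))) by ring.
  apply (derivable_pt_lim_mult f (fun r => exp (mu * (r - t0)))); auto.
Qed.

Lemma exp_weight_cancel mu s : exp (mu * s) * exp (- mu * s) = 1.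
Proof. rewrite <- exp_plus. replace (mu * s + - mu * s) with 0 by ring. apply exp_0. Qed.

Lemma exp_comparison (f f' : R -> R) t0 mu :
  (forall t, t0 <= t -> derivable_pt_lim f t (f' t)) ->
  (forall t, t0 <= t -> f' t <= - mu * f t) ->
  forall t, t0 <= t -> f t <= f t0 * exp (- mu * (t - t0)).
Proof.
  intros Hd Hle t Ht.
  assert (Hw : f t * exp (mu * (t - t0)) <= f t0 * exp (mu * (t0 - t0))).
  { apply (deriv_nonpos_le (fun s => f s * exp (mu * (s - t0)))
                            (fun s => (f' s + mu * f s) * exp (mu * (s - t0)))); auto.
    - intros s Hs. apply deriv_exp_weight. auto.
    - intros s Hs. pose proof (exp_pos (mu * (s - t0))). specialize (Hle s Hs). nra. }
  replace (t0 - t0) with 0 in Hw by ring. rewrite Rmult_0_r, exp_0, Rmult_1_r in Hw.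
  replace (f t) with (f t * exp (mu * (t - t0)) * exp (- mu * (t - t0)))
    by (rewrite Rmult_assoc, exp_weight_cancel; ring).
  apply Rmult_le_compat_r; [apply Rlt_le, exp_pos|exact Hw].
Qed.

Lemma linear_ode_exp_conv (f : R -> R) l k t0 : 0 < k ->
  (forall t, t0 <= t -> derivable_pt_lim f t (- k * (f t - l))) -> exp_conv t0 f l.
Proof.
  intros Hk Hd. exists (Rabs (f t0 - l)), k. split; [exact Hk|]. intros t Ht.
  assert (Hsol : (f t - l) * exp (k * (t - t0)) = (f t0 - l) * exp (k * (t0 - t0))).
  { apply (deriv_zero_const (fun s => (f s - l) * exp (k * (s - t0)))); auto.
    intros s Hs. replace 0 with ((- k * (f s - l) + k * (f s - l)) * exp (k * (s - t0))) by ring.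
    apply (deriv_exp_weight (fun r => f r - l)).
    replace (- k * (f s - l)) with (- k * (f s - l) - 0) by ring.
    apply derivable_pt_lim_minus; [auto|apply derivable_pt_lim_const]. }
  replace (t0 - t0) with 0 in Hsol by ring. rewrite Rmult_0_r, exp_0, Rmult_1_r in Hsol.
  replace (f t - l) with ((f t - l) * exp (k * (t - t0)) * exp (- k * (t - t0)))
    by (rewrite Rmult_assoc, exp_weight_cancel; ring).
  rewrite Hsol.
  rewrite Rabs_mult, (Rabs_pos_eq (exp _)) by (apply Rlt_le, exp_pos). lra.
Qed.

Lemma abs_le_sqrt_exp x C mu s : 0 <= C -> x ^ 2 <= C * exp (- mu * s) ->
  Rabs x <= sqrt C * exp (- (mu / 2) * s).
Proof.
  intros HC Hx.
  assert (HB : 0 <= sqrt C * exp (- (mu / 2) * s))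
    by (apply Rmult_le_pos; [apply sqrt_pos|apply Rlt_le, exp_pos]).
  rewrite <- (Rabs_pos_eq _ HB). apply Rsqr_le_abs_0. unfold Rsqr. replace (sqrt C * exp (- (mu / 2) * s) * (sqrt C * exp (- (mu / 2) * s)))
    with (sqrt C * sqrt C * (exp (- (mu / 2) * s) * exp (- (mu / 2) * s))) by ring.
  rewrite sqrt_sqrt, <- exp_plus by exact HC.
  replace (- (mu / 2) * s + - (mu / 2) * s) with (- mu * s) by field. simpl in Hx. lra.
Qed.

Lemma deriv_lap n (x : nat -> R -> R) (dx : nat -> R) t j :
  (forall l, (1 <= l <= n)%nat -> derivable_pt_lim (x l) t (dx l)) -> (1 <= j <= n)%nat ->
  derivable_pt_lim (fun s => lap n (fun l => x l s) j) t (lap n dx j).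
Proof.
  intros Hx Hj. unfold lap.
  replace ((dx (nxt n j) + dx (prv n j)) / 2 - dx j)
    with (/ 2 * (dx (nxt n j) + dx (prv n j)) - dx j) by field.
  apply (derivable_pt_lim_ext (fun s => / 2 * (x (nxt n j) s + x (prv n j) s) - x j s));
    [intros; field|].
  apply derivable_pt_lim_minus; [|apply Hx; exact Hj].
  apply derivable_pt_lim_scal, derivable_pt_lim_plus; apply Hx; [apply nxt_range|apply prv_range]; exact Hj.
Qed.

Section CyclicPI.
Variables (n : nat) (k kw : R).
Hypotheses (hn : (1 <= n)%nat) (hk : 0 < k) (hkw : 0 < kw).

Definition poincare_const : R := INR n * INR n.
Definition cross_gain : R :=
  Rmin (Rmin (kw * k / 2 / (k ^ 2 / 4 + kw * poincare_const)) (1 / (2 * poincare_const))) kw.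
Definition decay_rate : R := Rmin (k / (3 * poincare_const)) (cross_gain / 3).
Definition coercivity : R := Rmin (kw / 2) (1 / (4 * poincare_const)).

Lemma poincare_const_pos : 0 < poincare_const.
Proof. unfold poincare_const. assert (0 < INR n) by (apply lt_0_INR; lia). nra. Qed.

Lemma cross_gain_bounds :
  0 < cross_gain /\
  cross_gain * (k ^ 2 / 4 + kw * poincare_const) <= kw * k / 2 /\
  cross_gain * poincare_const <= 1 / 2 /\
  cross_gain <= kw.
Proof.
  pose proof poincare_const_pos as HP.
  assert (Hd : 0 < k ^ 2 / 4 + kw * poincare_const) by nra.
  set (a := kw * k / 2 / (k ^ 2 / 4 + kw * poincare_const)).
  set (b := 1 / (2 * poincare_const)).
  assert (Ha : 0 < a) by (unfold a; apply Rdiv_lt_0_compat; nra).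
  assert (Hb : 0 < b) by (unfold b; apply Rdiv_lt_0_compat; lra).
  assert (Hea : cross_gain <= a) by (eapply Rle_trans; [apply Rmin_l|apply Rmin_l]).
  assert (Heb : cross_gain <= b) by (eapply Rle_trans; [apply Rmin_l|apply Rmin_r]).
  repeat split.
  - unfold cross_gain. fold a b. repeat apply Rmin_glb_lt; assumption.
  - apply Rle_trans with (a * (k ^ 2 / 4 + kw * poincare_const));
      [apply Rmult_le_compat_r; lra|unfold a; right; field; lra].
  - apply Rle_trans with (b * poincare_const);
      [apply Rmult_le_compat_r; lra|unfold b; right; field; lra].
  - apply Rmin_r.
Qed.

Lemma decay_rate_pos : 0 < decay_rate.
Proof.
  destruct cross_gain_bounds as [He _]. pose proof poincare_const_pos.
  unfold decay_rate. apply Rmin_glb_lt; [apply Rdiv_lt_0_compat|]; lra.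
Qed.

Lemma coercivity_pos : 0 < coercivity.
Proof.
  pose proof poincare_const_pos.
  unfold coercivity. apply Rmin_glb_lt; [|apply Rdiv_lt_0_compat]; lra.
Qed.

Definition lyap (e w : nat -> R) : R :=
  kw * dot n e e + (1/2) * dot n (grad n w) (grad n w) + cross_gain * dot n e w.

(* The derivative of [lyap] along the flow, once the Laplacian terms are summed by parts. *)
Definition lyap_rate (e w : nat -> R) : R :=
  - kw * k * dot n (grad n e) (grad n e) - cross_gain / 2 * dot n (grad n w) (grad n w)
  - cross_gain * k / 2 * dot n (grad n e) (grad n w) + cross_gain * kw * dot n e e.

(* Scalar core of the dissipation estimate, in terms of Ne = |e|^2, Nw = |w|^2,
   Ge = |grad e|^2, Gw = |grad w|^2, X = <grad e, grad w>, Y = <e, w>. *)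
Lemma dissipation_scalar Ne Nw Ge Gw X Y :
  0 <= Ne -> 0 <= Nw -> Ne <= poincare_const * Ge -> Nw <= poincare_const * Gw ->
  - (k ^ 2 * Ge + Gw) <= 2 * k * X -> - (Ne + Nw) <= 2 * Y -> 2 * Y <= Ne + Nw ->
  - kw * k * Ge - cross_gain / 2 * Gw - cross_gain * k / 2 * X + cross_gain * kw * Ne
  <= - decay_rate * (kw * Ne + (1/2) * Gw + cross_gain * Y).
Proof.
  intros HNe HNw PE PW HX HY1 HY2.
  pose proof poincare_const_pos as HP.
  destruct cross_gain_bounds as (He0 & He1 & He2 & He3).
  assert (Hm1 : decay_rate <= k / (3 * poincare_const)) by apply Rmin_l.
  assert (Hm2 : decay_rate <= cross_gain / 3) by apply Rmin_r.
  pose proof decay_rate_pos as Hm0.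
  set (P := poincare_const) in *. set (ep := cross_gain) in *. set (m := decay_rate) in *.
  assert (HGe : 0 <= Ge) by nra. assert (HGw : 0 <= Gw) by nra.
  assert (Hrate : - kw * k * Ge - ep / 2 * Gw - ep * k / 2 * X + ep * kw * Ne
                  <= -(kw * k / 2) * Ge - (ep / 4) * Gw).
  { assert (ep * kw * Ne <= ep * kw * (P * Ge)) by (apply Rmult_le_compat_l; nra).
    assert (ep * (k ^ 2 / 4 + kw * P) * Ge <= kw * k / 2 * Ge) by (apply Rmult_le_compat_r; lra).
    nra. }
  assert (Hlyap : kw * Ne + (1/2) * Gw + ep * Y <= (3/2) * kw * P * Ge + (3/4) * Gw).
  { assert (ep * Nw <= ep * (P * Gw)) by (apply Rmult_le_compat_l; lra).
    assert (ep * Ne <= kw * Ne) by (apply Rmult_le_compat_r; lra).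
    assert (kw * Ne <= kw * (P * Ge)) by (apply Rmult_le_compat_l; lra).
    assert (ep * P * Gw <= 1/2 * Gw) by (apply Rmult_le_compat_r; lra).
    nra. }
  assert (m * ((3/2) * kw * P * Ge) <= (kw * k / 2) * Ge).
  { replace ((kw * k / 2) * Ge) with ((k / (3 * P)) * ((3/2) * kw * P * Ge)) by (field; lra).
    apply Rmult_le_compat_r; [|lra]. assert (0 <= kw * P * Ge) by (apply Rmult_le_pos; nra). nra. }
  assert (m * ((3/4) * Gw) <= (ep / 3) * ((3/4) * Gw)) by (apply Rmult_le_compat_r; lra).
  assert (m * (kw * Ne + (1/2) * Gw + ep * Y) <= m * ((3/2) * kw * P * Ge + (3/4) * Gw))
    by (apply Rmult_le_compat_l; lra).
  nra.
Qed.

Lemma coercivity_scalar Ne Nw Gw Y :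
  0 <= Ne -> 0 <= Nw -> Nw <= poincare_const * Gw -> - (Ne + Nw) <= 2 * Y ->
  coercivity * (Ne + Nw) <= kw * Ne + (1/2) * Gw + cross_gain * Y.
Proof.
  intros HNe HNw PW HY.
  pose proof poincare_const_pos as HP.
  destruct cross_gain_bounds as (He0 & _ & He2 & He3).
  assert (Hc1 : coercivity <= kw / 2) by apply Rmin_l.
  assert (Hc2 : coercivity <= 1 / (4 * poincare_const)) by apply Rmin_r.
  pose proof coercivity_pos.
  set (P := poincare_const) in *. set (ep := cross_gain) in *. set (c := coercivity) in *.
  assert (ep * Nw <= ep * (P * Gw)) by (apply Rmult_le_compat_l; lra).
  assert (ep * P * Gw <= 1/2 * Gw) by (apply Rmult_le_compat_r; nra).
  assert (ep * Ne <= kw * Ne) by (apply Rmult_le_compat_r; lra).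
  assert (c * Ne <= kw / 2 * Ne) by (apply Rmult_le_compat_r; lra).
  assert (c * Nw <= 1 / (4 * P) * (P * Gw)).
  { apply Rle_trans with (1 / (4 * P) * Nw); [apply Rmult_le_compat_r; lra|].
    apply Rmult_le_compat_l; [apply Rlt_le, Rdiv_lt_0_compat|]; lra. }
  replace (1 / (4 * P) * (P * Gw)) with (Gw / 4) in * by (field; lra).
  nra.
Qed.

Lemma lyap_dissipation e w : sum_to n e = 0 -> sum_to n w = 0 ->
  lyap_rate e w <= - decay_rate * lyap e w.
Proof.
  intros He Hw. unfold lyap_rate, lyap.
  apply (dissipation_scalar _ (dot n w w)); try apply dot_self_nonneg; try (apply poincare; assumption).
  - pose proof (dot_young n (grad n e) (grad n w) (- k)). lra.
  - pose proof (dot_young n e w (-1)). lra.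
  - pose proof (dot_young n e w 1). lra.
Qed.

Lemma lyap_coercive e w : sum_to n w = 0 -> coercivity * (dot n e e + dot n w w) <= lyap e w.
Proof.
  intros Hw. unfold lyap. apply (coercivity_scalar _ (dot n w w)); try apply dot_self_nonneg.
  - apply poincare; assumption.
  - pose proof (dot_young n e w (-1)). lra.
Qed.

(* Along the flow, the formal derivative of [lyap] equals [lyap_rate]: sum the Laplacian
   terms by parts and use the linearity of the gradient. *)
Lemma lyap_rate_flow (e w : nat -> R) :
  let de := lap n (fun l => w l + k * e l) in
  let dw := fun j => kw * e j in
  kw * (dot n de e + dot n e de)
  + (1/2) * (dot n (grad n dw) (grad n w) + dot n (grad n w) (grad n dw))
  + cross_gain * (dot n de w + dot n e dw)
  = lyap_rate e w.
Proof.
  intros de dw. unfold de, dw, lyap_rate.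
  rewrite (dot_comm n (lap _ _) e), (dot_comm n (lap _ _) w), (dot_comm n (grad n _) (grad n w)).
  rewrite !dot_lap, !dot_grad_add, !dot_grad_scal, dot_scalr by exact hn.
  rewrite (dot_comm n (grad n w) (grad n e)). field.
Qed.

Lemma lyap_deriv (e w : nat -> R -> R) t :
  (forall j, (1 <= j <= n)%nat ->
     derivable_pt_lim (e j) t (lap n (fun l => w l t + k * e l t) j)) ->
  (forall j, (1 <= j <= n)%nat -> derivable_pt_lim (w j) t (kw * e j t)) ->
  derivable_pt_lim (fun s => lyap (fun j => e j s) (fun j => w j s)) t
    (lyap_rate (fun j => e j t) (fun j => w j t)).
Proof.
  intros He Hw. rewrite <- lyap_rate_flow. unfold lyap.
  assert (Hgw : forall j, (1 <= j <= n)%nat ->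
            derivable_pt_lim (fun s => grad n (fun l => w l s) j) t
              (grad n (fun l => kw * e l t) j)).
  { intros j Hj. apply derivable_pt_lim_minus; apply Hw; [apply nxt_range|]; assumption. }
  repeat apply derivable_pt_lim_plus; apply derivable_pt_lim_scal; apply deriv_dot; assumption.
Qed.

Lemma cyclic_pi_decay (e w : nat -> R -> R) t0 :
  (forall j t, (1 <= j <= n)%nat -> t0 <= t ->
     derivable_pt_lim (e j) t (lap n (fun l => w l t + k * e l t) j)) ->
  (forall j t, (1 <= j <= n)%nat -> t0 <= t -> derivable_pt_lim (w j) t (kw * e j t)) ->
  (forall t, t0 <= t -> sum_to n (fun j => e j t) = 0) ->
  (forall t, t0 <= t -> sum_to n (fun j => w j t) = 0) ->
  exists A lam, 0 < lam /\ forall j t, (1 <= j <= n)%nat -> t0 <= t ->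
    Rabs (e j t) <= A * exp (- lam * (t - t0)) /\ Rabs (w j t) <= A * exp (- lam * (t - t0)).
Proof.
  intros He Hw Hse Hsw.
  set (V := fun s => lyap (fun j => e j s) (fun j => w j s)).
  assert (Hdecay : forall t, t0 <= t -> V t <= V t0 * exp (- decay_rate * (t - t0))).
  { apply (exp_comparison V (fun s => lyap_rate (fun j => e j s) (fun j => w j s))).
    - intros t Ht. apply lyap_deriv; auto.
    - intros t Ht. apply lyap_dissipation; auto. }
  pose proof coercivity_pos as Hc.
  assert (Henergy : forall t, t0 <= t ->
            dot n (fun j => e j t) (fun j => e j t) + dot n (fun j => w j t) (fun j => w j t)
            <= V t0 / coercivity * exp (- decay_rate * (t - t0))).
  { intros t Ht. apply (Rmult_le_reg_l coercivity); [exact Hc|].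
    replace (coercivity * (V t0 / coercivity * exp (- decay_rate * (t - t0))))
      with (V t0 * exp (- decay_rate * (t - t0))) by (field; lra).
    eapply Rle_trans; [apply lyap_coercive, Hsw; exact Ht|]. apply Hdecay; exact Ht. }
  assert (HV0 : 0 <= V t0 / coercivity).
  { unfold Rdiv. apply Rmult_le_pos; [|apply Rlt_le, Rinv_0_lt_compat; exact Hc].
    apply Rle_trans with (coercivity * (dot n (fun j => e j t0) (fun j => e j t0)
                                       + dot n (fun j => w j t0) (fun j => w j t0))).
    - apply Rmult_le_pos; [lra|]. pose proof (dot_self_nonneg n (fun j => e j t0)).
      pose proof (dot_self_nonneg n (fun j => w j t0)). lra.
    - apply lyap_coercive, Hsw, Rle_refl. }
  exists (sqrt (V t0 / coercivity)), (decay_rate / 2).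
  split; [pose proof decay_rate_pos; lra|]. intros j t Hj Ht.
  pose proof (Henergy t Ht).
  pose proof (dot_self_term_le n (fun l => e l t) j Hj).
  pose proof (dot_self_term_le n (fun l => w l t) j Hj).
  pose proof (dot_self_nonneg n (fun l => e l t)). pose proof (dot_self_nonneg n (fun l => w l t)).
  split; apply abs_le_sqrt_exp; auto; lra.
Qed.

End CyclicPI.

(* Unwrapped phases: subtracting the uniform spacing 2 pi j / n removes the 2 pi offsets in
   the neighbour averages, so the phase error [phibar - phi] is the Laplacian of the
   unwrapped phases. *)
Definition unwrapped (n : nat) (phi : nat -> R -> R) (j : nat) (t : R) : R :=
  phi j t - 2 * PI * INR j / INR n.

Lemma phase_error_lap n phi j t : (2 <= n)%nat -> (1 <= j <= n)%nat ->
  phibar n phi j t - phi j t = lap n (fun l => unwrapped n phi l t) j.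
Proof.
  intros Hn Hj. assert (HnR : INR n <> 0) by (apply not_0_INR; lia).
  unfold phibar, lap, nxt, prv, unwrapped.
  destruct (Nat.eqb_spec j 1) as [->|Hj1].
  - destruct (Nat.eqb_spec 1 n); [lia|]. simpl INR. field. exact HnR.
  - destruct (Nat.eqb_spec j n) as [->|Hjn].
    + rewrite minus_INR by lia. simpl INR. field. exact HnR.
    + replace (j + 1)%nat with (S j) by lia.
      rewrite S_INR, minus_INR by lia. simpl INR. field. exact HnR.
Qed.

Lemma sum_f_R0_sum_to k f : sum_f_R0 (fun j => f (S j)) k = sum_to (S k) f.
Proof. induction k as [|k IH]; [simpl; ring|]. simpl sum_f_R0. rewrite IH. reflexivity. Qed.

Section PhaseLoop.
Variables (n : nat) (k_phi k_omega t0 xibar : R) (xi : nat -> R) (phi omega : nat -> R -> R).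
Hypotheses (hn : (2 <= n)%nat) (hkp : 0 < k_phi) (hko : 0 < k_omega)
  (hxibar : sum_to n xi = INR n * xibar).
Hypothesis homega_ode : forall i t, (1 <= i <= n)%nat -> t0 <= t ->
  derivable_pt_lim (omega i) t (k_omega * (phibar n phi i t - phi i t)).
Hypothesis homega0 : forall i, (1 <= i <= n)%nat -> omega i t0 = 0.
Hypothesis hphi_ode : forall i t, (1 <= i <= n)%nat -> t0 <= t ->
  derivable_pt_lim (phi i) t (omega i t + k_phi * (phibar n phi i t - phi i t) + xi i).

Let phase_err (j : nat) (t : R) : R := phibar n phi j t - phi j t.
Let rate_err (j : nat) (t : R) : R := omega j t + xi j - xibar.

Lemma phase_err_sum t : sum_to n (fun j => phase_err j t) = 0.
Proof.
  unfold phase_err. rewrite (sum_to_ext n _ (lap n (fun l => unwrapped n phi l t))).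
  - apply sum_to_lap. lia.
  - intros j Hj. apply phase_error_lap; assumption.
Qed.

(* The integral states have zero sum: they start at 0 and their sum has derivative
   k_omega * sum of phase errors = 0. *)
Lemma rate_err_sum t : t0 <= t -> sum_to n (fun j => rate_err j t) = 0.
Proof.
  intros Ht.
  assert (Homega : sum_to n (fun j => omega j t) = sum_to n (fun j => omega j t0)).
  { apply (deriv_zero_const (fun s => sum_to n (fun j => omega j s))); [|exact Ht].
    intros s Hs. replace 0 with (sum_to n (fun j => k_omega * phase_err j s))
      by (rewrite sum_to_scal, phase_err_sum; ring).
    apply deriv_sum_to. intros j Hj. apply homega_ode; assumption. }
  rewrite (sum_to_ext n (fun j => omega j t0) (fun _ => 0)), sum_to_const in Homega
    by exact homega0.
  unfold rate_err.
  rewrite (sum_to_ext n _ (fun j => omega j t + xi j + - xibar)) by (intros; ring).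
  rewrite !sum_to_add, sum_to_const, Homega, hxibar. ring.
Qed.

(* The errors obey the ring PI-consensus dynamics: the common drift xibar is a constant
   and is annihilated by the Laplacian. *)
Lemma phase_err_deriv j t : (1 <= j <= n)%nat -> t0 <= t ->
  derivable_pt_lim (phase_err j) t (lap n (fun l => rate_err l t + k_phi * phase_err l t) j).
Proof.
  intros Hj Ht.
  apply (derivable_pt_lim_ext (fun s => lap n (fun l => unwrapped n phi l s) j)).
  { intros s. symmetry. apply phase_error_lap; assumption. }
  replace (lap n (fun l => rate_err l t + k_phi * phase_err l t) j)
    with (lap n (fun l => omega l t + k_phi * (phibar n phi l t - phi l t) + xi l - 0) j)
    by (unfold lap, rate_err, phase_err; field).
  apply deriv_lap; [|exact Hj]. intros l Hl.
  apply derivable_pt_lim_minus; [apply hphi_ode; assumption|apply derivable_pt_lim_const].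
Qed.

Lemma phase_loop_decay :
  exists A lam, 0 < lam /\ forall j t, (1 <= j <= n)%nat -> t0 <= t ->
    Rabs (phibar n phi j t - phi j t) <= A * exp (- lam * (t - t0)) /\
    Rabs (omega j t + xi j - xibar) <= A * exp (- lam * (t - t0)).
Proof.
  apply (cyclic_pi_decay n k_phi k_omega ltac:(lia) hkp hko phase_err rate_err t0).
  - intros j t Hj Ht. apply phase_err_deriv; assumption.
  - intros j t Hj Ht. unfold rate_err.
    replace (k_omega * phase_err j t) with (k_omega * phase_err j t + 0 - 0) by ring.
    apply derivable_pt_lim_minus; [|apply derivable_pt_lim_const].
    apply derivable_pt_lim_plus; [apply homega_ode; assumption|apply derivable_pt_lim_const].
  - intros t _. apply phase_err_sum.
  - exact rate_err_sum.
Qed.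

End PhaseLoop.

Theorem proposition3
  (n : nat) (hn : (2 <= n)%nat)
  (rho_s k_rho k_z k_phi k_omega : R)
  (hrho : 0 <= rho_s) (hkr : 0 < k_rho) (hkz : 0 < k_z)
  (hkp : 0 < k_phi) (hko : 0 < k_omega)
  (xi : nat -> R) (hxi : forall i, (1 <= i <= n)%nat -> 0 <= xi i)
  (t0 : R)
  (rho phi z omega : nat -> R -> R)
  (hrho_ode : forall i t, (1 <= i <= n)%nat -> t0 <= t ->
      derivable_pt_lim (rho i) t (k_rho * (rho_s - rho i t)))
  (homega_ode : forall i t, (1 <= i <= n)%nat -> t0 <= t ->
      derivable_pt_lim (omega i) t (k_omega * (phibar n phi i t - phi i t)))
  (homega0 : forall i, (1 <= i <= n)%nat -> omega i t0 = 0)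
  (hphi_ode : forall i t, (1 <= i <= n)%nat -> t0 <= t ->
      derivable_pt_lim (phi i) t
        (omega i t + k_phi * (phibar n phi i t - phi i t) + xi i))
  (hz_ode : forall i t, (1 <= i <= n)%nat -> t0 <= t ->
      derivable_pt_lim (z i) t (- k_z * z i t)) :
  let xibar := sum_f_R0 (fun j => xi (S j)) (n - 1) / INR n in
  forall i, (1 <= i <= n)%nat ->
    exp_conv t0 (rho i) rho_s /\
    exp_conv t0 (fun t => phi i t - phibar n phi i t) 0 /\
    exp_conv t0 (fun t => omega i t + k_phi * (phibar n phi i t - phi i t) + xi i) xibar /\
    exp_conv t0 (z i) 0.
Proof.
  intros xibar i Hi.
  assert (Hxibar : sum_to n xi = INR n * xibar).
  { unfold xibar. rewrite sum_f_R0_sum_to. replace (S (n - 1)) with n by lia.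
    field. apply not_0_INR. lia. }
  destruct (phase_loop_decay n k_phi k_omega t0 xibar xi phi omega hn hkp hko Hxibar
              homega_ode homega0 hphi_ode) as (A & lam & Hlam & Hdecay).
  split; [|split; [|split]].
  - apply (linear_ode_exp_conv _ _ k_rho); [exact hkr|]. intros t Ht.
    replace (- k_rho * (rho i t - rho_s)) with (k_rho * (rho_s - rho i t)) by ring. auto.
  - exists A, lam. split; [exact Hlam|]. intros t Ht.
    rewrite <- Rabs_Ropp. replace (- (phi i t - phibar n phi i t - 0))
      with (phibar n phi i t - phi i t) by ring. apply Hdecay; assumption.
  - exists ((1 + k_phi) * A), lam. split; [exact Hlam|]. intros t Ht.
    destruct (Hdecay i t Hi Ht) as [Hphase Hrate].
    replace (omega i t + k_phi * (phibar n phi i t - phi i t) + xi i - xibar)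
      with ((omega i t + xi i - xibar) + k_phi * (phibar n phi i t - phi i t)) by ring.
    eapply Rle_trans; [apply Rabs_triang|].
    rewrite Rabs_mult, (Rabs_pos_eq k_phi) by lra.
    assert (k_phi * Rabs (phibar n phi i t - phi i t) <= k_phi * (A * exp (- lam * (t - t0))))
      by (apply Rmult_le_compat_l; lra).
    lra.
  - apply (linear_ode_exp_conv _ _ k_z); [exact hkz|]. intros t Ht.
    replace (- k_z * (z i t - 0)) with (- k_z * z i t) by ring. auto.
Qed.
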